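(* In the setting described in the context (consecutive Newton–Anderson iterates $x_{k-1},x_k,x_{k+1}$ with $x_k,x_{k-1}\in B_{\hat r}(x^* )\setminus S$ under Assumption (A)), if the set $R^e_{k+1}$ is nonempty then its minimum $r^e_{k+1}$ satisfies $r^e_{k+1}\le 1$.
   Context: $f:\mathbb{R}^n\to\mathbb{R}^n$ is $C^3$ with $f(x^* )=0$; norms are Euclidean; $N=\operatorname{null}f'(x^* )\neq\{0\}$, $R=\operatorname{range}f'(x^* )$, $\mathbb{R}^n=N\oplus R$, $P_N,P_R$ orthogonal projections; $S=\{x:\det f'(x)=0\}$. Iterates: $e_k=x_k-x^*$, $w_{k+1}=-f'(x_k)^{-1}f(x_k)$; Newton–Anderson: $x_1=x_0+w_1$, and for $k\ge1$, $\gamma_{k+1}=(w_{k+1}-w_k)^Tw_{k+1}/\|w_{k+1}-w_k\|^2$, $x_{k+1}=x_k+w_{k+1}-\gamma_{k+1}(x_k-x_{k-1}+w_{k+1}-w_k)$. $\hat D(x):N\to N$, $v\mapsto P_Nf''(x^* )(x-x^*,v)$. Assumption (A): for $x\in B_{\hat r}(x^* )\setminus S$, $\hat D(x)$ is invertible on $N$, and $f'(x)^{-1}=\hat D(x)^{-1}P_N+\mathcal{O}(1)$ for $\|x-x^*\|<\hat r$. $T_kv=\tfrac12\hat D(x_k)^{-1}P_Nf''(x_k)(e_k,v)$ (range in $N$). Set $q_{k-1}^k:=e_{k+1}-\tfrac12\big((1-\gamma_{k+1})P_Ne_k+\gamma_{k+1}P_Ne_{k-1}\big)-\big((1-\gamma_{k+1})T_kP_Re_k+\gamma_{k+1}T_{k-1}P_Re_{k-1}\big)$.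 Define the five vectors $a_1=\tfrac{1-\gamma_{k+1}}{2}P_Ne_k$, $a_2=\tfrac{\gamma_{k+1}}{2}P_Ne_{k-1}$, $a_3=(1-\gamma_{k+1})T_kP_Re_k$, $a_4=\gamma_{k+1}T_{k-1}P_Re_{k-1}$, $a_5=P_Nq_{k-1}^k$, so that $P_Ne_{k+1}=a_1+\dots+a_5$. $S^e_{k+1}$ is the set of sums $\sum_{i\in I}a_i$ over nonempty proper subsets $I\subsetneq\{1,\dots,5\}$; $R^e_{k+1}=\{\|P_Ne_{k+1}-E\|/\|E\|:E\in S^e_{k+1},\,E\ne0\}$, and $r^e_{k+1}=\min R^e_{k+1}$. *)

(* Vectors of R^n are column vectors,
   f1(x) (the derivative) is represented by its Jacobian matrix Df x,
   f2(x)(u,v) (the second derivative) by D2 x u v. *)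
From HB Require Import structures.
From mathcomp Require Import all_boot all_order all_algebra.
From mathcomp Require Import all_classical all_reals all_analysis.
Set Implicit Arguments. Unset Strict Implicit. Unset Printing Implicit Defensive.
Import Order.TTheory GRing.Theory Num.Theory.
Import numFieldNormedType.Exports.
Local Open Scope classical_set_scope.
Local Open Scope ring_scope.

Section NA.
Variables (R : realType) (n : nat).
Notation V := 'cV[R]_n.

Definition edot (u v : V) : R := (u^T *m v) 0 0.
Definition enorm (v : V) : R := Num.sqrt (edot v v).

Definition orth_proj_null (A P : 'M[R]_n) : Prop :=
  P^T = P /\ (forall v : V, A *m (P *m v) = 0) /\
  (forall v : V, A *m v = 0 -> P *m v = v).
Definition orth_proj_range (A P : 'M[R]_n) : Prop :=
  P^T = P /\ (forall v : V, exists w : V, P *m v = A *m w) /\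
  (forall w : V, P *m (A *m w) = A *m w).

Variables (f : V -> V) (Df : V -> 'M[R]_n) (D2 : V -> V -> V -> V)
          (xstar : V) (PN PR : 'M[R]_n).

Definition C3_with_derivs : Prop :=
  (forall x v : V, derivable f x v /\ 'D_v f x = Df x *m v) /\
  (forall x u v : V, derivable (fun y => Df y *m v) x u /\
                     'D_u (fun y => Df y *m v) x = D2 x u v) /\
  (forall u v w : V, (forall x, derivable (fun y => D2 y u v) x w) /\
                     continuous (fun x => 'D_w (fun y => D2 y u v) x)).

Definition inN (v : V) : Prop := Df xstar *m v = 0.
Definition inS (x : V) : Prop := \det (Df x) = 0.
Definition inBall (r : R) (x : V) : Prop := enorm (x - xstar) < r.

Definition Dhat (x v : V) : V := PN *m D2 xstar (x - xstar) v.
(* the inverse of \hat D(x) on N (well defined under Assumption (A)) *)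
Definition Dhat_inv (x w : V) : V := get [set v : V | inN v /\ Dhat x v = w].

Definition AssumptionA (rhat : R) : Prop :=
  (forall x, inBall rhat x -> ~ inS x ->
     forall w, inN w -> exists! v, inN v /\ Dhat x v = w) /\
  (exists C : R, forall x, inBall rhat x -> ~ inS x ->
     forall y : V, enorm (invmx (Df x) *m y - Dhat_inv x (PN *m y)) <= C * enorm y).

(* Newton–Anderson: wNA x j = w_{j+1} = - f1(x_j)^{-1} f(x_j) *)
Definition wNA (x : nat -> V) (j : nat) : V := - (invmx (Df (x j)) *m f (x j)).
(* gammaNA x k = gamma_{k+1} *)
Definition gammaNA (x : nat -> V) (k : nat) : R :=
  edot (wNA x k - wNA x k.-1) (wNA x k) / (enorm (wNA x k - wNA x k.-1)) ^+ 2.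
Definition is_NA_sequence (x : nat -> V) : Prop :=
  x 1%N = x 0%N + wNA x 0 /\
  forall k, (1 <= k)%N ->
    x k.+1 = x k + wNA x k
             - gammaNA x k *: (x k - x k.-1 + wNA x k - wNA x k.-1).

Definition err (x : nat -> V) (j : nat) : V := x j - xstar.
Definition Tk (x : nat -> V) (j : nat) (v : V) : V :=
  2^-1 *: Dhat_inv (x j) (PN *m D2 (x j) (err x j) v).

Definition qk (x : nat -> V) (k : nat) : V :=
  let g := gammaNA x k in
  err x k.+1
  - 2^-1 *: ((1 - g) *: (PN *m err x k) + g *: (PN *m err x k.-1))
  - ((1 - g) *: Tk x k (PR *m err x k) + g *: Tk x k.-1 (PR *m err x k.-1)).

(* the five vectors a_1, ..., a_5 (indexed 0..4) *)
Definition avec (x : nat -> V) (k : nat) (i : 'I_5) : V :=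
  let g := gammaNA x k in
  match val i with
  | 0 => ((1 - g) / 2) *: (PN *m err x k)
  | 1 => (g / 2) *: (PN *m err x k.-1)
  | 2 => (1 - g) *: Tk x k (PR *m err x k)
  | 3 => g *: Tk x k.-1 (PR *m err x k.-1)
  | _ => PN *m qk x k
  end.

Definition Esum (x : nat -> V) (k : nat) (J : {set 'I_5}) : V :=
  \sum_(i in J) avec x k i.

(* the finite set R^e_{k+1}, as a list (over nonempty proper subsets J of {0..4},
   i.e. 0 < #|J| < 5, with E_J <> 0) *)
Definition Re_set (x : nat -> V) (k : nat) : seq R :=
  [seq enorm (PN *m err x k.+1 - Esum x k J) / enorm (Esum x k J)
  | J <- [seq J : {set 'I_5} <- enum [set: {set 'I_5}]%SET | [&& (0 < #|J|)%N, (#|J| < 5)%N & Esum x k J != 0]]].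

(* its minimum r^e_{k+1} (meaningful when the list is nonempty) *)
Definition re_min (x : nat -> V) (k : nat) : R :=
  \big[Order.min/head 0 (Re_set x k)]_(r <- Re_set x k) r.

End NA.

(* The vectors a_1, ..., a_5 add up to P_N e_{k+1}: this is the definition of
   q, once P_N is idempotent and T_k, T_{k-1} take values in N (Assumption (A)).
   Hence E_J + E_{J^c} = P_N e_{k+1} for every J, so the ratio attached to J is
   |E_{J^c}| / |E_J| and the one attached to J^c is its reciprocal: whichever
   of E_J, E_{J^c} has the larger norm gives an element of R^e_{k+1} that is
   at most 1. *)
From HB Require Import structures.
From mathcomp Require Import all_boot all_order all_algebra.
From mathcomp Require Import all_classical all_reals all_analysis.
From mathcomp Require Import zify.
Import Order.TTheory GRing.Theory Num.Theory.
Import numFieldNormedType.Exports.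

Set Implicit Arguments.
Unset Strict Implicit.
Unset Printing Implicit Defensive.
Local Open Scope ring_scope.

(* [a = 0] is allowed: then [b / a = 0]. *)
Lemma divr_le1 (R : numFieldType) (a b : R) : 0 <= a -> b <= a -> b / a <= 1.
Proof.
rewrite le0r => /orP[/eqP->|a_gt0] ba; first by rewrite invr0 mulr0 ler01.
by rewrite ler_pdivrMr // mul1r.
Qed.

Lemma card_setC_proper (T : finType) (J : {set T}) :
  (0 < #|J| < #|T|)%N -> (0 < #|~: J| < #|T|)%N.
Proof. by have := cardsC J; lia. Qed.

Lemma enorm0 (R : realType) (n : nat) : enorm (0 : 'cV[R]_n) = 0.
Proof. by rewrite /enorm /edot mulmx0 mxE sqrtr0. Qed.

Lemma enorm_ge0 (R : realType) (n : nat) (v : 'cV[R]_n) : 0 <= enorm v.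
Proof. exact: sqrtr_ge0. Qed.

Section ProjectedError.
Variables (R : realType) (n : nat).
Local Notation V := 'cV[R]_n.
Variables (f : V -> V) (Df : V -> 'M[R]_n) (D2 : V -> V -> V -> V)
          (xstar : V) (PN PR : 'M[R]_n).
Hypothesis PN_proj : orth_proj_null (Df xstar) PN.

Lemma PN_fix (v : V) : inN Df xstar v -> PN *m v = v.
Proof. by case: PN_proj => _ [_]; apply. Qed.

Lemma PN_inN (v : V) : inN Df xstar (PN *m v).
Proof. by case: PN_proj => _ [+ _]; apply. Qed.

Lemma PN_idem (v : V) : PN *m (PN *m v) = PN *m v.
Proof. exact/PN_fix/PN_inN. Qed.

Variable rhat : R.
Hypothesis assumptionA : AssumptionA Df D2 xstar PN rhat.

Lemma Dhat_inv_inN (z w : V) :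
  inBall xstar rhat z -> ~ inS Df z -> inN Df xstar w ->
  inN Df xstar (Dhat_inv Df D2 xstar PN z w).
Proof.
move=> Bz Sz Nw; have [v [[Nv Dv] _]] := assumptionA.1 z Bz Sz w Nw.
have sol : exists v, [set v : V | inN Df xstar v /\ Dhat D2 xstar PN z v = w]%classic v.
  by exists v.
by have [] := getPex sol.
Qed.

Lemma PN_Tk (x : nat -> V) (j : nat) (v : V) :
  inBall xstar rhat (x j) -> ~ inS Df (x j) ->
  PN *m Tk Df D2 xstar PN x j v = Tk Df D2 xstar PN x j v.
Proof.
move=> Bj Sj; rewrite /Tk -scalemxAr; congr (_ *: _).
exact/PN_fix/Dhat_inv_inN/PN_inN.
Qed.

Lemma sum_avec (x : nat -> V) (k : nat) :
  inBall xstar rhat (x k) -> ~ inS Df (x k) ->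
  inBall xstar rhat (x k.-1) -> ~ inS Df (x k.-1) ->
  \sum_(i < 5) avec f Df D2 xstar PN PR x k i = PN *m err xstar x k.+1.
Proof.
move=> Bk Sk Bk1 Sk1; rewrite !big_ord_recl big_ord0 /avec /= /qk.
have := PN_Tk (PR *m err xstar x k) Bk Sk.
have := PN_Tk (PR *m err xstar x k.-1) Bk1 Sk1.
set T0 := Tk _ _ _ _ _ k _; set T1 := Tk _ _ _ _ _ k.-1 _.
set e0 := err _ _ k; set e1 := err _ _ k.-1; set e2 := err _ _ k.+1.
set g := gammaNA _ _ _ _; clearbody T0 T1 e0 e1 e2 g => PN_T1 PN_T0.
rewrite !(mulmxBr, mulmxDr, scalerDr, scalerA, =^~ scalemxAr, PN_idem, PN_T0, PN_T1).
by rewrite !(mulrC 2^-1) addr0 -addrA -opprD !addrA addrC addKr.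
Qed.

End ProjectedError.

Section MinimalRatio.
Variables (R : realType) (n : nat).
Local Notation V := 'cV[R]_n.
Variables (f : V -> V) (Df : V -> 'M[R]_n) (D2 : V -> V -> V -> V)
          (xstar : V) (PN PR : 'M[R]_n) (x : nat -> V) (k : nat).
Hypothesis sum_avec_eq :
  \sum_(i < 5) avec f Df D2 xstar PN PR x k i = PN *m err xstar x k.+1.
Local Notation E := (Esum f Df D2 xstar PN PR x k).
Local Notation re := (re_min f Df D2 xstar PN PR x k).

Lemma Esum_setC (J : {set 'I_5}) : E J + E (~: J) = PN *m err xstar x k.+1.
Proof.
rewrite -sum_avec_eq (bigID (mem J)) /=; congr (_ + _).
by apply: eq_bigl => i; rewrite inE.
Qed.

Lemma mem_Re_set (J : {set 'I_5}) : (0 < #|J| < 5)%N -> E J != 0 ->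
  enorm (PN *m err xstar x k.+1 - E J) / enorm (E J)
    \in Re_set f Df D2 xstar PN PR x k.
Proof.
move=> /andP[J0 J5] EJ.
apply: (map_f (fun J => enorm (PN *m err xstar x k.+1 - E J) / enorm (E J))).
by rewrite mem_filter mem_enum inE J0 J5 EJ.
Qed.

Lemma re_min_le1_of_le (J : {set 'I_5}) : (0 < #|J| < 5)%N -> E J != 0 ->
  enorm (E (~: J)) <= enorm (E J) -> re <= 1.
Proof.
move=> JP EJ le_EJ; apply: (bigmin_inf_seq _ _ xpredT _ id (mem_Re_set JP EJ)) => //.
by rewrite -(Esum_setC J) addrAC subrr add0r divr_le1 ?enorm_ge0.
Qed.

Lemma re_min_le1 : Re_set f Df D2 xstar PN PR x k != [::] -> re <= 1.
Proof.
rewrite /Re_set -size_eq0 size_map size_eq0 -has_filter.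
case/hasP => J _ /and3P[J0 J5 EJ]; have JP : (0 < #|J| < 5)%N by rewrite J0.
have [|lt_EJ] := leP (enorm (E (~: J))) (enorm (E J)).
  exact: re_min_le1_of_le.
apply: (@re_min_le1_of_le (~: J)).
- by move: (card_setC_proper (J := J)); rewrite card_ord; apply.
- by apply: contraTneq lt_EJ => ->; rewrite enorm0 -leNgt enorm_ge0.
- by rewrite finset.setCK ltW.
Qed.

End MinimalRatio.

Theorem lemma4p1 (R : realType) (n : nat)
  (f : 'cV[R]_n -> 'cV[R]_n) (Df : 'cV[R]_n -> 'M[R]_n)
  (D2 : 'cV[R]_n -> 'cV[R]_n -> 'cV[R]_n -> 'cV[R]_n)
  (xstar : 'cV[R]_n) (PN PR : 'M[R]_n) (rhat : R) (x : nat -> 'cV[R]_n) (k : nat) :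
  C3_with_derivs f Df D2 ->
  f xstar = 0 ->
  (exists v : 'cV[R]_n, v != 0 /\ inN Df xstar v) ->
  (forall v : 'cV[R]_n, exists u w : 'cV[R]_n,
      inN Df xstar u /\ v = u + Df xstar *m w) ->
  (forall u w : 'cV[R]_n, inN Df xstar u -> u = Df xstar *m w -> u = 0) ->
  orth_proj_null (Df xstar) PN ->
  orth_proj_range (Df xstar) PR ->
  0 < rhat ->
  AssumptionA Df D2 xstar PN rhat ->
  is_NA_sequence f Df x ->
  (1 <= k)%N ->
  inBall xstar rhat (x k) -> ~ inS Df (x k) ->
  inBall xstar rhat (x k.-1) -> ~ inS Df (x k.-1) ->
  Re_set f Df D2 xstar PN PR x k != [::] ->
  re_min f Df D2 xstar PN PR x k <= 1.
Proof.
move=> _ _ _ _ _ PN_proj _ _ assumptionA _ _ Bk Sk Bk1 Sk1.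
by apply: re_min_le1; exact: (sum_avec f PR PN_proj assumptionA Bk Sk Bk1 Sk1).
Qed.
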